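(* For every liner $X$ the following are equivalent: (1) $X$ is $0$-hypoparallel; (2) $X$ is $0$-parallel; (3) any two disjoint lines in $X$ are skew; (4) $X$ is projective; (5) $X$ is strongly regular; (6) $X$ is modular.
   Context: A liner is a set $X$ of points with a family of subsets called lines such that any two distinct points lie in a unique line and every line contains at least two points. For distinct $x,y$, $\overline{xy}$ is the line through them and $\overline{xx}:=\{x\}$. A set is flat if it contains $\overline{xy}$ for all its distinct points; $\overline A$ is the smallest flat containing $A$; the rank $\|A\|$ is the smallest cardinality of $B\subseteq X$ with $A\subseteq\overline B$; a plane is a flat of rank 3. For a cardinal $\kappa$, $X$ is $\kappa$-hypoparallel (resp. $\kappa$-parallel) if for every plane $P$, line $L\subseteq P$ and point $x\in P\setminus L$ there are at most (resp. exactly) $\kappa$ lines $\Lambda$ with $x\in\Lambda\subseteq P\setminus L$. Two lines $A,B$ are skew if $\|A\cup B\|=4$. $X$ is projective if for all $o,x,y\in X$, $p\in\overline{xy}$ and $v\in\overline{oy}\setminus\{p\}$ we have $\overline{vp}\cap\overline{ox}\neq\varnothing$. $X$ is strongly regular if for every nonempty flat $A$ and $b\in X\setminus A$, $\overline{A\cup\{b\}}=\bigcup_{a\in A}\overline{ab}$. $X$ is modular if $\|A\cap B\|+\|A\cup B\|=\|A\|+\|B\|$ for all flats $A,B$. *)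

From mathcomp Require Import all_boot.
From mathcomp Require Import boolp classical_sets.
From Stdlib Require List.
Set Implicit Arguments. Unset Strict Implicit. Unset Printing Implicit Defensive.
Local Open Scope classical_set_scope.

Section Liner.
Variables (X : Type) (lines : set (set X)).

Definition is_liner : Prop :=
  (forall x y : X, x <> y ->
     exists L, [/\ lines L, L x, L y &
       forall L', lines L' -> L' x -> L' y -> L' = L]) /\
  (forall L, lines L -> exists x y : X, [/\ x <> y, L x & L y]).

Definition lineth (x y : X) : set X :=
  [set z | (x = y /\ z = x) \/
           (x <> y /\ exists L, [/\ lines L, L x, L y & L z])].

Definition flat (A : set X) : Prop :=
  forall x y, A x -> A y -> x <> y -> lineth x y `<=` A.

Definition flat_hull (A : set X) : set X :=
  [set z | forall F, flat F -> A `<=` F -> F z].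

Definition spanned_by_n (A : set X) (n : nat) : Prop :=
  exists s : seq X, [/\ List.NoDup s, size s = n &
    A `<=` flat_hull [set x | List.In x s]].

(* rank: Some n if the smallest cardinality of a B with A ⊆ hull B is the
   finite number n, None if it is infinite. *)
Definition rank (A : set X) : option nat :=
  match pselect (exists n, spanned_by_n A n) with
  | left h => Some (ex_minn (P := fun n => `[< spanned_by_n A n >])
                      (let: ex_intro n hn := h in ex_intro _ n (asboolT hn)))
  | right _ => None
  end.

Definition plane (P : set X) : Prop := flat P /\ rank P = Some 3.

Definition parallels_through (P L : set X) (x : X) : set (set X) :=
  [set M | [/\ lines M, M x & M `<=` P `\` L]].

(* κ-hypoparallel / κ-parallel, for a finite cardinal κ *)
Definition hypoparallel (k : nat) : Prop :=
  forall P L x, plane P -> lines L -> L `<=` P -> P x -> ~ L x ->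
    exists s : seq (set X), [/\ List.NoDup s, size s <= k &
      forall M, parallels_through P L x M -> List.In M s].

Definition parallel (k : nat) : Prop :=
  forall P L x, plane P -> lines L -> L `<=` P -> P x -> ~ L x ->
    exists s : seq (set X), [/\ List.NoDup s, size s = k &
      forall M, parallels_through P L x M <-> List.In M s].

Definition skew (A B : set X) : Prop := rank (A `|` B) = Some 4.

Definition disjoint_lines_skew : Prop :=
  forall A B, lines A -> lines B -> A `&` B = set0 -> skew A B.

Definition projective : Prop :=
  forall o x y p v, lineth x y p -> lineth o y v -> v <> p ->
    lineth v p `&` lineth o x !=set0.

Definition strongly_regular : Prop :=
  forall A b, flat A -> A !=set0 -> ~ A b ->
    flat_hull (A `|` [set b]) = \bigcup_(a in A) lineth a b.

Definition radd (a b : option nat) : option nat :=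
  match a, b with Some m, Some n => Some (m + n) | _, _ => None end.

Definition modular : Prop :=
  forall A B, flat A -> flat B ->
    radd (rank (A `&` B)) (rank (A `|` B)) = radd (rank A) (rank B).

End Liner.

(* Without parallels, any two lines of a plane meet; the lines vp and ox of the
   projective axiom both lie in the plane spanned by o, x, y, so (1) gives (4).
   Under projectivity the cone of all lines ab, a in a flat A, is itself flat,
   hence it is the flat generated by A and b: this is strong regularity.
   Strong regularity yields the exchange property of flat hulls and thus a
   Steinitz exchange lemma, so a basis of A ∩ B extends to bases of A and of B
   whose union is a basis of A ∪ B; counting gives modularity.  Modularity
   makes two disjoint lines span a flat of rank 4, whereas two disjoint lines of
   one plane would span rank at most 3. *)

From Pilot Require Import Defs.
From mathcomp Require Import all_boot.
From mathcomp Require Import boolp classical_sets.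
From mathcomp Require Import zify.
Set Implicit Arguments. Unset Strict Implicit. Unset Printing Implicit Defensive.
Local Open Scope classical_set_scope.

Section Liner.
Variables (X : Type) (lines : set (set X)).
Hypothesis liner : is_liner lines.
Local Notation lineth := (lineth lines).
Local Notation flat := (flat lines).
Local Notation hull := (flat_hull lines).
Local Notation rank := (rank lines).
Local Notation spanned_by_n := (spanned_by_n lines).

Definition seq_set (s : seq X) : set X := [set z | List.In z s].

Lemma seq_set_nil : seq_set [::] = set0.
Proof. by apply/seteqP; split=> z []. Qed.

Lemma seq_set_cons x s : seq_set (x :: s) = [set x] `|` seq_set s.
Proof. by apply/seteqP; split=> z [->|?]; by [left|right]. Qed.

Lemma seq_set_cat s1 s2 : seq_set (s1 ++ s2) = seq_set s1 `|` seq_set s2.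
Proof. by apply/seteqP; split=> z /List.in_app_iff. Qed.

Lemma line_through x y : x <> y -> exists L, [/\ lines L, L x & L y].
Proof. by case: liner => H _ /H [L [? ? ? _]]; exists L. Qed.

Lemma line_unique L M x y :
  lines L -> lines M -> L x -> L y -> M x -> M y -> x <> y -> L = M.
Proof.
move=> lL lM Lx Ly Mx My xy; case: liner => H _.
case: (H _ _ xy) => N [_ _ _ uniqN].
by rewrite (uniqN _ lL Lx Ly) (uniqN _ lM Mx My).
Qed.

Lemma linethE L x y z : lines L -> L x -> L y -> x <> y -> lineth x y z <-> L z.
Proof.
move=> lL Lx Ly xy; split; last by move=> Lz; right; split=> //; exists L.
case=> [[//]|[_ [M [lM Mx My Mz]]]].
by rewrite (line_unique lL lM Lx Ly Mx My xy).
Qed.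

Lemma lineth_lines x y : x <> y -> lines (lineth x y).
Proof.
move=> xy; case: (line_through xy) => L [lL Lx Ly].
suff -> : lineth x y = L by [].
by apply/seteqP; split=> z /(linethE z lL Lx Ly xy).
Qed.

Lemma lineth_l x y : lineth x y x.
Proof.
have [->|xy] := pselect (x = y); first by left.
by case: (line_through xy) => L [lL Lx Ly]; apply/(linethE _ lL Lx Ly xy).
Qed.

Lemma lineth_r x y : lineth x y y.
Proof.
have [->|xy] := pselect (x = y); first by left.
by case: (line_through xy) => L [lL Lx Ly]; apply/(linethE _ lL Lx Ly xy).
Qed.

Lemma linethC x y : lineth x y = lineth y x.
Proof.
suff sym u v : lineth u v `<=` lineth v u by apply/seteqP; split; apply: sym.
move=> z; case=> [[-> ->]|[uv [L [? ? ? ?]]]]; first by left.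
by right; split; [move=> e; apply: uv|exists L].
Qed.

Lemma lineth_perm x y z : lineth x y z -> x <> z -> lineth x z y.
Proof.
by case=> [[-> ->]//|[xy [L [lL Lx Ly Lz]]]] xz; right; split=> //; exists L.
Qed.

Lemma hull_flat A : flat (hull A).
Proof. by move=> x y Ax Ay xy z xyz F fF AF; apply: (fF x y) => //; [apply: Ax|apply: Ay]. Qed.

Lemma sub_hull A : A `<=` hull A.
Proof. by move=> x Ax F _; apply. Qed.

Lemma hull_min A F : flat F -> A `<=` F -> hull A `<=` F.
Proof. by move=> fF AF x; apply. Qed.

Lemma hull_mono A B : A `<=` B -> hull A `<=` hull B.
Proof. by move=> AB; apply: hull_min; [exact: hull_flat|move=> x /AB /sub_hull]. Qed.

Lemma flat_set1 b : flat [set b].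
Proof. by move=> x y -> ->. Qed.

Lemma flatI A B : flat A -> flat B -> flat (A `&` B).
Proof. by move=> fA fB x y [Ax Bx] [Ay By] xy z xyz; split; [apply: (fA x y)|apply: (fB x y)]. Qed.

Lemma flat_line L : lines L -> flat L.
Proof. by move=> lL x y Lx Ly xy z /(linethE z lL Lx Ly xy). Qed.

Lemma flat_lineth x y : flat (lineth x y).
Proof.
have [<-|xy] := pselect (x = y); last exact: flat_line (lineth_lines xy).
by move=> u v [[_ ->]|[]//] [[_ ->]|[]].
Qed.

Lemma lineth_sub_flat F x y : flat F -> F x -> F y -> lineth x y `<=` F.
Proof.
move=> fF Fx Fy z; have [<-|xy] := pselect (x = y); last exact: fF.
by case=> [[_ ->]|[]].
Qed.

Lemma rank_le A n : spanned_by_n A n -> exists2 m, rank A = Some m & m <= n.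
Proof.
move=> An; rewrite /Defs.rank; case: pselect => [h|[]]; last by exists n.
by case: ex_minnP => m _ min_m; exists m => //; apply: min_m; exact/asboolP.
Qed.

Lemma rank_spanned A n : rank A = Some n -> spanned_by_n A n.
Proof. by rewrite /Defs.rank; case: pselect => // h [<-]; case: ex_minnP => m /asboolP. Qed.

Lemma rank_eq A n : spanned_by_n A n ->
  (forall m, spanned_by_n A m -> n <= m) -> rank A = Some n.
Proof.
move=> An min_n; case: (rank_le An) => m rA mn.
by rewrite rA; congr Some; apply/eqP; rewrite eqn_leq mn min_n //; apply: rank_spanned.
Qed.

Lemma spanned_sub A B n : A `<=` B -> spanned_by_n B n -> spanned_by_n A n.
Proof. by move=> AB [s [? ? H]]; exists s; split=> // x /AB /H. Qed.

Lemma rank_None_sup A B : rank A = None -> A `<=` B -> rank B = None.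
Proof.
move=> rA AB; case rB: (rank B) => [n|] //.
by case: (rank_le (spanned_sub AB (rank_spanned rB))) => m; rewrite rA.
Qed.

Lemma NoDup_pair (a b : X) : a <> b -> List.NoDup [:: a; b].
Proof.
move=> ab; constructor; first by case=> // e; apply: ab.
by constructor; [case|constructor].
Qed.

Lemma NoDup_triple (a b c : X) : a <> b -> a <> c -> b <> c -> List.NoDup [:: a; b; c].
Proof.
move=> ab ac bc; constructor; last exact: NoDup_pair.
by case=> [e|[e|[]]]; [apply: ab|apply: ac].
Qed.

Lemma hull_size1_eq t u v :
  size t <= 1 -> hull (seq_set t) u -> hull (seq_set t) v -> u = v.
Proof.
case: t => [|a [|b t]] // _.
  have sub0 : hull set0 `<=` set0 by apply: hull_min.
  by rewrite seq_set_nil => /sub0.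
have sub : hull (seq_set [:: a]) `<=` [set a].
  by apply: hull_min; [exact: flat_set1|move=> z [->|[]]].
by move=> /sub -> /sub ->.
Qed.

Lemma hull_size2_lineth t u v w : size t <= 2 -> List.NoDup t ->
  hull (seq_set t) u -> hull (seq_set t) v -> hull (seq_set t) w -> u <> v -> lineth u v w.
Proof.
move=> st nd Hu Hv Hw uv.
case: (leqP (size t) 1) => [t1|t1]; first by case: uv; exact: hull_size1_eq Hu Hv.
case: t st nd t1 Hu Hv Hw => [|a [|b [|c t]]] // _ nd _.
have ab : a <> b by move: nd => /List.NoDup_cons_iff [H _] e; apply: H; left.
case: (line_through ab) => L [lL La Lb].
have sub : hull (seq_set [:: a; b]) `<=` L.
  by apply: hull_min; [exact: flat_line|move=> z [<-|[<-|[]]]].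
by move=> /sub Lu /sub Lv /sub Lw; apply/(linethE _ lL Lu Lv uv).
Qed.

Lemma rank_set0 : rank set0 = Some 0.
Proof. by apply: rank_eq => //; exists [::]; split=> //; constructor. Qed.

Lemma rank_line L : lines L -> rank L = Some 2.
Proof.
move=> lL; case: liner => _ /(_ L lL) [x [y [xy Lx Ly]]].
apply: rank_eq => [|m [s [nd <- Hs]]].
  exists [:: x; y]; split=> //; first exact: NoDup_pair.
  move=> z /(linethE z lL Lx Ly xy); apply: lineth_sub_flat; first exact: hull_flat.
    by apply: sub_hull; left.
  by apply: sub_hull; right; left.
by case: (leqP 2 (size s)) => // s1; case: xy; apply: (hull_size1_eq s1); apply: Hs.
Qed.

Lemma plane_hull3 o x y : o <> x -> ~ lineth o x y ->
  plane lines (hull (seq_set [:: o; x; y])).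
Proof.
move=> ox noxy; split; first exact: hull_flat.
have oy : o <> y by move=> e; apply: noxy; rewrite -e; apply: lineth_l.
have xy : x <> y by move=> e; apply: noxy; rewrite -e; apply: lineth_r.
apply: rank_eq => [|m [s [nd <- Hs]]].
  by exists [:: o; x; y]; split=> //; exact: NoDup_triple.
case: (leqP 3 (size s)) => // s2; case: noxy.
have oxy z : List.In z [:: o; x; y] -> hull (seq_set s) z by move=> /sub_hull /Hs.
by apply: (hull_size2_lineth s2 nd) => //; apply: oxy; [left|right; left|right; right; left].
Qed.

Lemma modular_disjoint_lines_skew : modular lines -> disjoint_lines_skew lines.
Proof.
move=> mod A B lA lB AB; have := mod A B (flat_line lA) (flat_line lB).
rewrite AB rank_set0 (rank_line lA) (rank_line lB) /skew.
by case: (rank (A `|` B)) => //= n [->].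
Qed.

Lemma disjoint_lines_skew_hypoparallel0 :
  disjoint_lines_skew lines -> hypoparallel lines 0.
Proof.
move=> skewL P L x [_ rP] lL LP _ _; exists [::]; split=> //; first constructor.
move=> M [lM _ MPL]; exfalso.
have LM : L `&` M = set0 by apply/seteqP; split=> // z [Lz /MPL []].
have LMP : spanned_by_n (L `|` M) 3.
  by apply: spanned_sub (rank_spanned rP) => z [/LP|/MPL []].
by case: (rank_le LMP) => m; rewrite (skewL L M lL lM LM) => -[<-].
Qed.

Lemma hypoparallel0_parallel0 : hypoparallel lines 0 -> parallel lines 0.
Proof.
move=> hyp P L x PP lL LP Px nLx; case: (hyp P L x PP lL LP Px nLx) => [[|? ?] [_ _ Hs]] //.
by exists [::]; split=> //; [constructor|move=> M; split=> [/Hs|]].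
Qed.

Lemma parallel0_hypoparallel0 : parallel lines 0 -> hypoparallel lines 0.
Proof.
move=> par P L x PP lL LP Px nLx; case: (par P L x PP lL LP Px nLx) => [[|? ?] [nd _ Hs]] //.
by exists [::]; split=> // M /Hs.
Qed.

Lemma hypoparallel0_lines_meet P K N : hypoparallel lines 0 -> plane lines P ->
  lines K -> lines N -> K `<=` P -> N `<=` P -> K `&` N !=set0.
Proof.
move=> hyp PP lK lN KP NP; case: liner => _ /(_ N lN) [v [_ [_ Nv _]]].
have [Kv|nKv] := pselect (K v); first by exists v.
apply: contrapT => nKN.
case: (hyp P K v PP lK KP (NP v Nv) nKv) => [[|? ?] [_ _ Hs]] //.
by apply: (Hs N); split=> // z Nz; split=> [|Kz]; [exact: NP|apply: nKN; exists z].
Qed.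

Lemma hypoparallel0_projective : hypoparallel lines 0 -> projective lines.
Proof.
move=> hyp o x y p v pxy voy vp.
have [eox|ox] := pselect (o = x).
  subst x; have oy : o <> y.
    by move=> oy; apply: vp; move: pxy voy; rewrite -oy => -[[_ ->]|[]//] [[_ ->]|[]].
  case: (line_through oy) => L [lL Lo Ly].
  have Lv : L v by apply/(linethE v lL Lo Ly oy).
  have Lp : L p by apply/(linethE p lL Lo Ly oy).
  by exists o; split; [apply/(linethE o lL Lv Lp vp)|exact: lineth_l].
have [oxy|noxy] := pselect (lineth o x y).
  exists p; split; first exact: lineth_r.
  by move: pxy; apply: lineth_sub_flat; [exact: flat_lineth|exact: lineth_r|].
pose P := hull (seq_set [:: o; x; y]).
have Po : P o by apply: sub_hull; left.
have Px : P x by apply: sub_hull; right; left.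
have Py : P y by apply: sub_hull; right; right; left.
have Pv : P v by move: voy; apply: lineth_sub_flat => //; exact: hull_flat.
have Pp : P p by move: pxy; apply: lineth_sub_flat => //; exact: hull_flat.
apply: (hypoparallel0_lines_meet hyp (plane_hull3 ox noxy)).
- exact: lineth_lines.
- exact: lineth_lines.
- by apply: lineth_sub_flat => //; exact: hull_flat.
- by apply: lineth_sub_flat => //; exact: hull_flat.
Qed.

Definition cone (A : set X) (b : X) : set X := \bigcup_(a in A) lineth a b.

Section Cone.
Variables (A : set X) (b : X).
Hypotheses (flatA : flat A) (nAb : ~ A b).

Lemma sub_cone : A `<=` cone A b.
Proof. by move=> a Aa; exists a => //; exact: lineth_l. Qed.

Lemma lineth_cone_r q : cone A b q -> lineth q b `<=` cone A b.
Proof.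
case=> a Aa aq z qz; exists a => //.
by move: qz; apply: lineth_sub_flat; [exact: flat_lineth| |exact: lineth_r].
Qed.

Hypothesis proj : projective lines.

Lemma lineth_cone_l a w : A a -> cone A b w -> lineth a w `<=` cone A b.
Proof.
move=> Aa [a' Aa' a'w] z awz.
have [Aw|nAw] := pselect (A w).
  by apply: sub_cone; move: awz; apply: lineth_sub_flat.
have [wb|wb] := pselect (w = b); first by subst w; exists a.
have [zb|zb] := pselect (z = b); first by subst z; exists a => //; exact: lineth_r.
have a'wb : lineth a' w b by apply: lineth_perm => // e; apply: nAw; rewrite -e.
case: (proj awz a'wb (nesym zb)) => r [bzr a'ar].
have Ar : A r by move: a'ar; apply: lineth_sub_flat.
have rb : r <> b by move=> e; apply: nAb; rewrite -e.
by exists r => //; rewrite linethC; apply: lineth_perm (nesym rb).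
Qed.

Lemma flat_cone : flat (cone A b).
Proof.
move=> u w Cu Cw uw z uwz.
have [Au|nAu] := pselect (A u); first exact: lineth_cone_l uwz.
have [Aw|nAw] := pselect (A w); first by rewrite linethC in uwz; exact: lineth_cone_l uwz.
have [ub|ub] := pselect (u = b); first by subst u; rewrite linethC in uwz; exact: lineth_cone_r uwz.
have [wb|wb] := pselect (w = b); first by subst w; exact: lineth_cone_r uwz.
have [zb|zb] := pselect (z = b); first by subst z; apply: (lineth_cone_r Cu); exact: lineth_r.
case: Cu => a Aa abu.
have aub : lineth a u b by apply: lineth_perm => // e; apply: nAu; rewrite -e.
rewrite linethC in uwz.
case: (proj uwz aub (nesym zb)) => q [bzq awq].
have [qb|qb] := pselect (q = b); last first.
  apply: (lineth_cone_r (lineth_cone_l Aa Cw awq)).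
  by rewrite linethC; exact: lineth_perm bzq (nesym qb).
subst q; have abw : lineth a b w by apply: lineth_perm => // e; apply: nAb; rewrite -e.
exists a => //; move: uwz; apply: lineth_sub_flat => //; exact: flat_lineth.
Qed.

End Cone.

Lemma projective_strongly_regular : projective lines -> strongly_regular lines.
Proof.
move=> proj A b fA [a Aa] nAb; apply/seteqP; split.
  apply: hull_min; first exact: flat_cone.
  by move=> z [Az|->]; [exact: sub_cone|exists a => //; exact: lineth_r].
move=> z [a' Aa']; apply: lineth_sub_flat; first exact: hull_flat.
  by apply: sub_hull; left.
by apply: sub_hull; right.
Qed.

Fixpoint independent (P : set X) (s : seq X) : Prop :=
  if s is x :: s' then ~ hull P x /\ independent (P `|` [set x]) s' else True.

Lemma independent_cat s1 s2 P :
  independent P (s1 ++ s2) <-> independent P s1 /\ independent (P `|` seq_set s1) s2.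
Proof.
elim: s1 P => [|x s1 IH] P /=.
  by rewrite seq_set_nil setU0; tauto.
by rewrite IH seq_set_cons setUA; tauto.
Qed.

Lemma independent_NoDup s P :
  independent P s -> List.NoDup s /\ seq_set s `<=` [set z | ~ P z].
Proof.
elim: s P => [|x s IH] P; first by split=> //; constructor.
move=> [nx /IH [nd nP]]; split; first by constructor=> // /nP; apply; right.
by move=> z [<-|/nP nPz] Pz; [exact: nx (sub_hull Pz)|apply: nPz; left].
Qed.

Section StronglyRegular.
Hypothesis sreg : strongly_regular lines.

Lemma hull_setU1 P x z : hull (P `|` [set x]) z ->
  z = x \/ exists2 g, hull P g & lineth g x z.
Proof.
move=> Pxz; have {}Pxz : hull (hull P `|` [set x]) z.
  by move: Pxz; apply: hull_mono => w [/sub_hull|->]; [left|right].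
have [Px|nPx] := pselect (hull P x).
  right; exists z; last exact: lineth_l.
  by move: Pxz; apply: hull_min; [exact: hull_flat|move=> w [//|->]].
have [[g Pg]|nP] := pselect (hull P !=set0); last first.
  left; move: Pxz; apply: (hull_min (F := [set x])); first exact: flat_set1.
  by move=> w [Pw|//]; case: nP; exists w.
right; move: Pxz; rewrite (sreg (@hull_flat P) (ex_intro _ g Pg) nPx).
by case=> g' Pg' ?; exists g'.
Qed.

Lemma hull_exchange Q b c : hull (Q `|` [set b]) c -> ~ hull Q c -> hull (Q `|` [set c]) b.
Proof.
move=> /hull_setU1 [->|[g Qg gbc]] nQc; first by apply: sub_hull; right.
have gc : g <> c by move=> e; apply: nQc; rewrite -e.
move: (lineth_perm gbc gc); apply: lineth_sub_flat; first exact: hull_flat.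
  by move: Qg; apply: hull_mono => w; left.
by apply: sub_hull; right.
Qed.

Lemma hull_exchange_seq x t P : hull (P `|` seq_set t) x -> ~ hull P x ->
  exists2 t', size t' < size t &
    hull (P `|` seq_set t) `<=` hull (P `|` [set x] `|` seq_set t').
Proof.
elim: t P => [|y t IH] P Px nPx.
  by case: nPx; move: Px; apply: hull_mono => z [//|[]].
rewrite seq_set_cons setUA in Px *.
have [Pyx|nPyx] := pselect (hull (P `|` [set y]) x).
  exists t => //; apply: hull_min; first exact: hull_flat.
  move=> z [[Pz|->]|tz]; last by apply: sub_hull; right.
    by apply: sub_hull; left; left.
  by move: (hull_exchange Pyx nPx); apply: hull_mono => w [Pw|->]; left; [left|right].
case: (IH _ Px nPyx) => t' lt_t' sub_t'; exists (y :: t') => //.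
by rewrite seq_set_cons setUA [P `|` [set x] `|` _]setUAC.
Qed.

Lemma independent_size_le s t P :
  independent P s -> seq_set s `<=` hull (P `|` seq_set t) -> size s <= size t.
Proof.
elim: s t P => [//|x s IH] t P [nPx ind] st.
case: (hull_exchange_seq (st x (or_introl erefl)) nPx) => t' lt_t' sub_t'.
apply: leq_ltn_trans lt_t'; apply: IH ind _.
by move=> z sz; apply: sub_t'; apply: st; right.
Qed.

Lemma rank_independent s S : independent set0 s ->
  S `<=` hull (seq_set s) -> seq_set s `<=` S -> rank S = Some (size s).
Proof.
move=> ind Ss sS; apply: rank_eq => [|m [t [_ <- St]]].
  by exists s; split=> //; case: (independent_NoDup ind).
by apply: (independent_size_le ind); rewrite set0U; apply: subset_trans sS St.
Qed.

Lemma independent_extend F t : flat F -> F `<=` hull (seq_set t) ->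
  forall c, independent set0 c -> seq_set c `<=` F ->
  exists a, [/\ independent set0 (c ++ a), seq_set (c ++ a) `<=` F
              & F `<=` hull (seq_set (c ++ a))].
Proof.
move=> fF Ft c; have [k] := ubnP (size t - size c); elim: k c => // k IH c lt_k ic cF.
have [Fc|/existsPNP [x Fx ncx]] := pselect (F `<=` hull (seq_set c)).
  by exists [::]; rewrite cats0.
have icx : independent set0 (c ++ [:: x]).
  by apply/independent_cat; split=> //=; rewrite set0U.
have cxF : seq_set (c ++ [:: x]) `<=` F by rewrite seq_set_cat => z [/cF|[<-|[]]].
have : size (c ++ [:: x]) <= size t.
  by apply: (independent_size_le icx); rewrite set0U; apply: subset_trans cxF Ft.
rewrite size_cat addn1 => le_ct.
case: (IH (c ++ [:: x])) => //; first by rewrite size_cat addn1; lia.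
by move=> a; rewrite -catA; exists (x :: a).
Qed.

Lemma independent_transfer B s PA PB : flat B -> seq_set s `<=` B ->
  (forall z, B z -> hull PA z -> hull PB z) -> independent PB s -> independent PA s.
Proof.
elim: s PA PB => [//|x s IH] PA PB fB sB AB [nPBx ind].
have Bx : B x by apply: sB; left.
split; first by move/(AB x Bx).
apply: (IH _ (PB `|` [set x])) => // [z sz|z Bz]; first by apply: sB; right.
have PBx : hull PB `<=` hull (PB `|` [set x]) by apply: hull_mono => w; left.
have [->|zx] := pselect (z = x); first by move=> _; apply: sub_hull; right.
case/hull_setU1 => [//|[g PAg gxz]].
have [gz|gz] := pselect (g = z); first by subst g; exact: PBx _ (AB z Bz PAg).
have Bg : B g.
  have zxg : lineth z x g.
    by apply: lineth_perm zx; rewrite linethC; exact: lineth_perm gxz gz.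
  by move: zxg; apply: lineth_sub_flat.
move: gxz; apply: lineth_sub_flat; first exact: hull_flat.
  exact: PBx _ (AB g Bg PAg).
by apply: sub_hull; right.
Qed.

Lemma independent_cat_flats A B c a b : flat A -> flat B ->
  independent set0 (c ++ a) -> seq_set (c ++ a) `<=` A ->
  independent set0 (c ++ b) -> seq_set (c ++ b) `<=` B ->
  A `&` B `<=` hull (seq_set c) -> independent set0 (c ++ a ++ b).
Proof.
move=> fA fB ica caA /independent_cat [_ icb] cbB ABc.
rewrite catA; apply/independent_cat; split=> //.
apply: (independent_transfer fB _ _ icb) => [z bz|z Bz].
  by apply: cbB; rewrite seq_set_cat; right.
by rewrite !set0U => caz; apply: ABc; split=> //; move: caz; apply: hull_min.
Qed.

Lemma strongly_regular_modular : modular lines.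
Proof.
move=> A B fA fB.
case rA: (rank A) => [nA|]; last first.
  by rewrite (rank_None_sup rA (@subsetUl _ A B)); case: (rank (A `&` B)).
case rB: (rank B) => [nB|]; last first.
  by rewrite (rank_None_sup rB (@subsetUr _ A B)); case: (rank (A `&` B)).
case: (rank_spanned rA) => tA [_ _ AtA]; case: (rank_spanned rB) => tB [_ _ BtB].
have nilAB : seq_set [::] `<=` A `&` B by rewrite seq_set_nil; exact: sub0set.
have [c] := independent_extend (flatI fA fB) (subset_trans (@subIsetl _ A B) AtA)
  (c := [::]) I nilAB.
rewrite cat0s => -[ic cAB ABc].
have [a [ia aA Aa]] := independent_extend fA AtA ic (subset_trans cAB (@subIsetl _ A B)).
have [b [ib bB Bb]] := independent_extend fB BtB ic (subset_trans cAB (@subIsetr _ A B)).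
move: rA rB; rewrite (rank_independent ia Aa aA) (rank_independent ib Bb bB) => -[<-] [<-].
have iab := independent_cat_flats fA fB ia aA ib bB ABc.
rewrite (rank_independent ic ABc cAB) (rank_independent iab) /=.
- by rewrite !size_cat; congr Some; lia.
- rewrite subUset; split; [apply: subset_trans Aa _|apply: subset_trans Bb _]; apply: hull_mono.
    by rewrite catA [seq_set (_ ++ b)]seq_set_cat; exact: subsetUl.
  by rewrite !seq_set_cat; apply: setUS; exact: subsetUr.
- rewrite catA seq_set_cat; apply: setUSS => // z bz.
  by apply: bB; rewrite seq_set_cat; right.
Qed.

End StronglyRegular.

End Liner.

Theorem theorem3p4p1 (X : Type) (lines : set (set X)) :
  is_liner lines ->
  [<-> hypoparallel lines 0;
       parallel lines 0;
       disjoint_lines_skew lines;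
       projective lines;
       strongly_regular lines;
       modular lines].
Proof.
move=> liner.
have proj_mod : projective lines -> modular lines.
  by move/(projective_strongly_regular liner)/(strongly_regular_modular liner).
tfae.
- exact: hypoparallel0_parallel0.
- move/parallel0_hypoparallel0/(hypoparallel0_projective liner)/proj_mod.
  exact: modular_disjoint_lines_skew.
- by move/disjoint_lines_skew_hypoparallel0/(hypoparallel0_projective liner).
- exact: projective_strongly_regular.
- exact: strongly_regular_modular.
- by move/(modular_disjoint_lines_skew liner)/disjoint_lines_skew_hypoparallel0.
Qed.
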